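(* Fix a constant $c\ge1$. There is a constant $C>0$ depending only on $c$ such that for all integers $n\ge3$, $U\ge3$ with $n/c\le U\le cn$, all $\epsilon\in(0,1/2]$, and all $t\ge C\,n\log(1/\epsilon)$, $$v(t):=\max_{i}\big\|(K^t)_i-\pi\big\|_1\le\epsilon,$$ where $(K^t)_i$ denotes the row of $K^t$ indexed by state $i$, the maximum is over all $2n$ states, and $\pi$ is the stationary distribution of the original chain.
   Context: Let $n\ge3$ and $U\ge3$ be integers. The ''original chain'' is the Markov chain on the $2n$ states $\{1,\dots,n,1',\dots,n'\}$ with the following transition probabilities (all unlisted transitions have probability $0$): for $2\le i\le n-1$: $i\to i$ w.p. $1/2$, $i\to i+1$ w.p. $\frac12(1-\frac1U)$, $i\to(i+1)'$ w.p. $\frac1{2U}$; for $2\le i\le n-1$: $i'\to i'$ w.p. $1/2$, $i'\to(i-1)'$ w.p. $\frac12(1-\frac1U)$, $i'\to i-1$ w.p. $\frac1{2U}$; $1\to2$ w.p. $1-\frac1U$, $1\to2'$ w.p. $\frac1U$; $1'\to1$ w.p. $1-\frac1U$, $1'\to1'$ w.p. $\frac1U$; $n\to n'$ w.p. $1-\frac1U$, $n\to n$ w.p. $\frac1U$; $n'\to(n-1)'$ w.p. $1-\frac1U$, $n'\to n-1$ w.p. $\frac1U$. $K$ is its $2n\times 2n$ row-stochastic transition matrix ($K_{xy}$ = probability of moving from $x$ to $y$), and $\pi$ its unique stationary distribution ($\pi K=\pi$). *)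

From Stdlib Require Import Reals Lra Lia List Arith.
Import ListNotations.
Open Scope R_scope.

(* A state is a pair (primed, i) with 1 <= i <= n:
   (false, i) is state i and (true, i) is state i'. *)
Definition state := (bool * nat)%type.

Definition state_eqb (x y : state) : bool :=
  Bool.eqb (fst x) (fst y) && Nat.eqb (snd x) (snd y).

Definition states (n : nat) : list state :=
  map (fun i => (false, i)) (seq 1 n) ++ map (fun i => (true, i)) (seq 1 n).

Definition rsum {A : Type} (l : list A) (f : A -> R) : R :=
  fold_right (fun a acc => f a + acc) 0 l.

Definition ind (b : bool) (p : R) : R := if b then p else 0.

Definition Kp (n U : nat) (x y : state) : R :=
  let u := INR U in
  let i := snd x in
  match fst x with
  | false =>
      if Nat.eqb i 1 then
        ind (state_eqb y (false, 2%nat)) (1 - 1/u)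
        + ind (state_eqb y (true, 2%nat)) (1/u)
      else if Nat.eqb i n then
        ind (state_eqb y (true, n)) (1 - 1/u)
        + ind (state_eqb y (false, n)) (1/u)
      else
        ind (state_eqb y (false, i)) (1/2)
        + ind (state_eqb y (false, S i)) ((1/2) * (1 - 1/u))
        + ind (state_eqb y (true, S i)) (1 / (2 * u))
  | true =>
      if Nat.eqb i 1 then
        ind (state_eqb y (false, 1%nat)) (1 - 1/u)
        + ind (state_eqb y (true, 1%nat)) (1/u)
      else if Nat.eqb i n then
        ind (state_eqb y (true, pred n)) (1 - 1/u)
        + ind (state_eqb y (false, pred n)) (1/u)
      else
        ind (state_eqb y (true, i)) (1/2)
        + ind (state_eqb y (true, pred i)) ((1/2) * (1 - 1/u))
        + ind (state_eqb y (false, pred i)) (1 / (2 * u))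
  end.

Fixpoint Kpow (n U t : nat) (x y : state) : R :=
  match t with
  | O => if state_eqb x y then 1 else 0
  | S t' => rsum (states n) (fun z => Kpow n U t' x z * Kp n U z y)
  end.

(* pi is a stationary distribution of K (it is unique, the chain being
   irreducible, so this characterizes "the" stationary distribution). *)
Definition stationary (n U : nat) (pi : state -> R) : Prop :=
  (forall x, In x (states n) -> 0 <= pi x) /\
  rsum (states n) pi = 1 /\
  (forall y, In y (states n) -> rsum (states n) (fun x => pi x * Kp n U x y) = pi y).

Definition vdist (n U : nat) (pi : state -> R) (t : nat) : R :=
  fold_right Rmax 0
    (map (fun i => rsum (states n) (fun y => Rabs (Kpow n U t i y - pi y))) (states n)).

From Pilot Require Import Defs.
From Stdlib Require Import Reals Lra Lia List Arith.
Import ListNotations.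
Open Scope R_scope.

(* A Doeblin minorization argument.  Over [T = 3n - 1] steps, consider the paths
   that advance around the cycle of states, take exactly one jump (which
   reflects the cycle), and advance again.  Varying the moment of the jump lets
   such paths reach any target while the number of holding steps sweeps a range
   carrying a constant fraction of a binomial(3n, 1/2) law, so
   [K^T x y >= 2^-69 (1 - 1/U)^T / U] for all [x], [y].  Since [U] is comparable
   to [n], this is [g / (2n)] for a constant [g > 0] depending only on [c]; hence
   every [T] steps contract the distance to [pi] by [1 - g], and
   [O(n log (1/eps))] steps suffice. *)

Lemma rsum_nil {A} (f : A -> R) : rsum [] f = 0.
Proof. reflexivity. Qed.

Lemma rsum_cons {A} (a : A) l f : rsum (a :: l) f = f a + rsum l f.
Proof. reflexivity. Qed.

Lemma rsum_app {A} (l1 l2 : list A) f : rsum (l1 ++ l2) f = rsum l1 f + rsum l2 f.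
Proof. induction l1 as [|a l1 IH]; cbn [app]; rewrite ?rsum_cons, ?IH, ?rsum_nil; lra. Qed.

Lemma rsum_ext {A} (l : list A) f g :
  (forall x, In x l -> f x = g x) -> rsum l f = rsum l g.
Proof.
  induction l as [|a l IH]; intros H; [reflexivity|].
  rewrite !rsum_cons, H, IH; [reflexivity| |simpl; auto].
  intros; apply H; simpl; auto.
Qed.

Lemma rsum_plus {A} (l : list A) f g : rsum l (fun x => f x + g x) = rsum l f + rsum l g.
Proof. induction l; rewrite ?rsum_cons, ?rsum_nil; lra. Qed.

Lemma rsum_minus {A} (l : list A) f g : rsum l (fun x => f x - g x) = rsum l f - rsum l g.
Proof. induction l; rewrite ?rsum_cons, ?rsum_nil; lra. Qed.

Lemma rsum_mult_l {A} (l : list A) f c : rsum l (fun x => c * f x) = c * rsum l f.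
Proof. induction l; rewrite ?rsum_cons, ?rsum_nil; lra. Qed.

Lemma rsum_mult_r {A} (l : list A) f c : rsum l (fun x => f x * c) = rsum l f * c.
Proof. induction l; rewrite ?rsum_cons, ?rsum_nil; lra. Qed.

Lemma rsum_const {A} (l : list A) c : rsum l (fun _ => c) = INR (length l) * c.
Proof. induction l; rewrite ?rsum_cons, ?rsum_nil; cbn [length]; rewrite ?S_INR; simpl; lra. Qed.

Lemma rsum_le {A} (l : list A) f g :
  (forall x, In x l -> f x <= g x) -> rsum l f <= rsum l g.
Proof.
  induction l as [|a l IH]; intros H; rewrite ?rsum_cons, ?rsum_nil; [lra|].
  assert (f a <= g a) by (apply H; simpl; auto).
  assert (rsum l f <= rsum l g) by (apply IH; intros; apply H; simpl; auto).
  lra.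
Qed.

Lemma rsum_nonneg {A} (l : list A) f : (forall x, In x l -> 0 <= f x) -> 0 <= rsum l f.
Proof.
  intros H. rewrite <- (Rmult_0_r (INR (length l))), <- rsum_const.
  now apply rsum_le.
Qed.

Lemma rsum_comm {A B} (l : list A) (m : list B) f :
  rsum l (fun a => rsum m (fun b => f a b)) = rsum m (fun b => rsum l (fun a => f a b)).
Proof.
  induction l as [|a l IH].
  - rewrite rsum_nil, (rsum_ext _ _ (fun _ => 0)), rsum_const; [lra|reflexivity].
  - rewrite rsum_cons, IH, <- rsum_plus. reflexivity.
Qed.

Lemma rsum_abs_le {A} (l : list A) f : Rabs (rsum l f) <= rsum l (fun x => Rabs (f x)).
Proof.
  induction l; rewrite ?rsum_cons, ?rsum_nil; [rewrite Rabs_R0; lra|].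
  eapply Rle_trans; [apply Rabs_triang|lra].
Qed.

Lemma rsum_map {A B} (g : A -> B) l f : rsum (map g l) f = rsum l (fun x => f (g x)).
Proof. induction l; cbn [map]; rewrite ?rsum_cons, ?IHl; reflexivity. Qed.

Lemma rsum_incl_le {A} (m l : list A) f :
  NoDup m -> incl m l -> (forall x, In x l -> 0 <= f x) -> rsum m f <= rsum l f.
Proof.
  revert l. induction m as [|a m IH]; intros l Hnd Hinc Hpos.
  - rewrite rsum_nil. now apply rsum_nonneg.
  - apply NoDup_cons_iff in Hnd as [Ha Hnd].
    destruct (in_split a l (Hinc a (or_introl eq_refl))) as [l1 [l2 ->]].
    assert (Hl : rsum (l1 ++ a :: l2) f = f a + rsum (l1 ++ l2) f)
      by (rewrite !rsum_app, rsum_cons; lra).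
    rewrite rsum_cons, Hl. apply Rplus_le_compat_l, IH; [exact Hnd| |].
    + intros x Hx. assert (In x (l1 ++ a :: l2)) as Hx' by (apply Hinc; simpl; auto).
      apply in_app_iff in Hx' as [H|[<-|H]]; apply in_app_iff; auto. contradiction.
    + intros x Hx. apply Hpos, in_app_iff. apply in_app_iff in Hx as [H|H]; simpl; auto.
Qed.

Lemma rsum_indicator {A} (l : list A) (eqb : A -> A -> bool)
  (eqb_spec : forall x y, eqb x y = true <-> x = y) a g :
  NoDup l -> In a l -> rsum l (fun y => if eqb y a then g y else 0) = g a.
Proof.
  induction l as [|b l IH]; intros Hnd Hin; [inversion Hin|].
  apply NoDup_cons_iff in Hnd as [Hb Hnd]. rewrite rsum_cons.
  destruct Hin as [->|Hin].
  - rewrite (proj2 (eqb_spec a a) eq_refl).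
    rewrite (rsum_ext _ _ (fun _ => 0)), rsum_const; [lra|].
    intros y Hy. destruct (eqb y a) eqn:E; [apply eqb_spec in E; congruence|reflexivity].
  - rewrite IH by assumption.
    destruct (eqb b a) eqn:E; [apply eqb_spec in E; congruence|lra].
Qed.

Fixpoint sum_lt (f : nat -> R) (L : nat) : R :=
  match L with O => 0 | S L' => sum_lt f L' + f L' end.

Lemma sum_lt_ext f g L : (forall j, (j < L)%nat -> f j = g j) -> sum_lt f L = sum_lt g L.
Proof. induction L; intros H; simpl; auto. rewrite IHL, H; auto. Qed.

Lemma sum_lt_plus f g L : sum_lt (fun j => f j + g j) L = sum_lt f L + sum_lt g L.
Proof. induction L; simpl; lra. Qed.

Lemma sum_lt_mult_l f c L : sum_lt (fun j => c * f j) L = c * sum_lt f L.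
Proof. induction L; simpl; lra. Qed.

Lemma sum_lt_le f g L : (forall j, (j < L)%nat -> f j <= g j) -> sum_lt f L <= sum_lt g L.
Proof.
  induction L; intros H; simpl; [lra|].
  assert (sum_lt f L <= sum_lt g L) by (apply IHL; intros; apply H; lia).
  assert (f L <= g L) by (apply H; lia). lra.
Qed.

Lemma sum_lt_0 L : sum_lt (fun _ => 0) L = 0.
Proof. induction L; simpl; lra. Qed.

Lemma sum_lt_nonneg f L : (forall j, (j < L)%nat -> 0 <= f j) -> 0 <= sum_lt f L.
Proof. intros H. rewrite <- (sum_lt_0 L). now apply sum_lt_le. Qed.

Lemma sum_lt_Sr f L : sum_lt f (S L) = f O + sum_lt (fun j => f (S j)) L.
Proof. induction L; simpl in *; lra. Qed.

Lemma sum_lt_head_le f L : (forall j, 0 <= f j) -> f O <= sum_lt f (S L).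
Proof.
  intros H. rewrite sum_lt_Sr.
  assert (0 <= sum_lt (fun j => f (S j)) L) by (apply sum_lt_nonneg; auto). lra.
Qed.

Lemma sum_lt_rsum f L : sum_lt f L = rsum (seq 0 L) f.
Proof.
  induction L; [reflexivity|].
  rewrite seq_S, rsum_app, rsum_cons, rsum_nil. simpl. rewrite IHL. lra.
Qed.

Lemma sum_lt_indicator f a L :
  (a < L)%nat -> sum_lt (fun q => if Nat.eqb q a then f q else 0) L = f a.
Proof.
  induction L; intros H; [lia|]. simpl. destruct (Nat.eqb_spec L a) as [->|].
  - rewrite (sum_lt_ext _ (fun _ => 0)), sum_lt_0; [lra|].
    intros j Hj. destruct (Nat.eqb_spec j a); [lia|auto].
  - rewrite IHL; [lra|lia].
Qed.

Lemma sum_lt_add f K L : sum_lt f (K + L) = sum_lt f K + sum_lt (fun i => f (K + i)%nat) L.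
Proof.
  induction L; simpl; [rewrite Nat.add_0_r; lra|].
  rewrite Nat.add_succ_r. simpl. rewrite IHL. lra.
Qed.

Lemma sum_lt_trunc f m L :
  (forall j, (m < j)%nat -> f j = 0) -> (m < L)%nat -> sum_lt f L = sum_lt f (S m).
Proof.
  intros H HL. induction HL as [|L HL IH]; auto.
  rewrite <- IH. simpl. rewrite (H L); [lra|lia].
Qed.

Lemma sum_lt_double f L : sum_lt f (2 * L) = sum_lt (fun i => f (2 * i)%nat + f (2 * i + 1)%nat) L.
Proof.
  induction L; [reflexivity|].
  replace (2 * S L)%nat with (S (S (2 * L))) by lia.
  change (sum_lt f (2 * L) + f (2 * L)%nat + f (S (2 * L)) =
          sum_lt (fun i => f (2 * i)%nat + f (2 * i + 1)%nat) L + (f (2 * L)%nat + f (2 * L + 1)%nat)).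
  rewrite IHL. replace (S (2 * L)) with (2 * L + 1)%nat by lia. lra.
Qed.

Lemma sum_lt_double_S f L :
  sum_lt f (S (2 * L)) = f O + sum_lt (fun i => f (2 * i + 1)%nat + f (2 * i + 2)%nat) L.
Proof.
  rewrite sum_lt_Sr, sum_lt_double.
  apply f_equal, sum_lt_ext. intros j _. f_equal; f_equal; lia.
Qed.

Fixpoint binom (m k : nat) : R :=
  match m, k with
  | _, O => 1
  | O, S _ => 0
  | S m', S k' => binom m' k' + binom m' (S k')
  end.

Lemma binom_0r m : binom m 0 = 1.
Proof. now destruct m. Qed.

Lemma binom_SS m k : binom (S m) (S k) = binom m k + binom m (S k).
Proof. reflexivity. Qed.

Lemma binom_ge0 m k : 0 <= binom m k.
Proof.
  revert k; induction m; intros [|k]; simpl; try lra.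
  pose proof (IHm k); pose proof (IHm (S k)); lra.
Qed.

Lemma binom_gt m k : (m < k)%nat -> binom m k = 0.
Proof. revert k; induction m; intros [|k] H; simpl; try lia; auto. rewrite !IHm; lia || lra. Qed.

Lemma binom_diag m : binom m m = 1.
Proof. induction m; simpl; auto. rewrite IHm, binom_gt; lia || lra. Qed.

Lemma binom_le_Sn m k : binom m k <= binom (S m) k.
Proof.
  destruct k; [rewrite !binom_0r; lra|].
  rewrite binom_SS. pose proof (binom_ge0 m k). lra.
Qed.

(* [2 ^ m] times the mean of [g] under the binomial(m, 1/2) law. *)
Definition binom_mean (m : nat) (g : nat -> R) : R := sum_lt (fun j => binom m j * g j) (S m).

Lemma binom_mean_ext m f g : (forall j, f j = g j) -> binom_mean m f = binom_mean m g.
Proof. intros H. apply sum_lt_ext. intros. now rewrite H. Qed.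

Lemma binom_mean_lin m a b f g :
  binom_mean m (fun j => a * f j + b * g j) = a * binom_mean m f + b * binom_mean m g.
Proof.
  unfold binom_mean.
  rewrite (sum_lt_ext _ (fun j => a * (binom m j * f j) + b * (binom m j * g j))) by (intros; ring).
  now rewrite sum_lt_plus, !sum_lt_mult_l.
Qed.

Lemma binom_mean_S m g : binom_mean (S m) g = binom_mean m g + binom_mean m (fun j => g (S j)).
Proof.
  unfold binom_mean. rewrite sum_lt_Sr, binom_0r.
  rewrite (sum_lt_ext (fun j => binom (S m) (S j) * g (S j))
             (fun j => binom m j * g (S j) + binom m (S j) * g (S j))) by (intros; rewrite binom_SS; ring).
  rewrite sum_lt_plus, (sum_lt_Sr (fun j => binom m j * g j)), binom_0r.
  simpl (sum_lt (fun j => binom m (S j) * g (S j)) (S m)).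
  rewrite (binom_gt m (S m)) by lia. ring.
Qed.

Lemma binom_mean_1 m : binom_mean m (fun _ => 1) = 2 ^ m.
Proof. induction m; [unfold binom_mean; simpl; lra|]. rewrite binom_mean_S, IHm. simpl. lra. Qed.

Lemma binom_mean_id m : 2 * binom_mean m INR = INR m * 2 ^ m.
Proof.
  induction m; [unfold binom_mean; simpl; lra|]. rewrite binom_mean_S.
  rewrite (binom_mean_ext m (fun j => INR (S j)) (fun j => 1 * INR j + 1 * 1))
    by (intros; rewrite S_INR; ring).
  rewrite binom_mean_lin, binom_mean_1, S_INR. simpl pow. lra.
Qed.

Lemma binom_mean_sq m : 4 * binom_mean m (fun j => INR j * INR j) = INR m * (INR m + 1) * 2 ^ m.
Proof.
  induction m; [unfold binom_mean; simpl; lra|]. rewrite binom_mean_S.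
  rewrite (binom_mean_ext m (fun j => INR (S j) * INR (S j))
             (fun j => 1 * (INR j * INR j) + 1 * (2 * INR j + 1))) by (intros; rewrite S_INR; ring).
  rewrite binom_mean_lin.
  rewrite (binom_mean_ext m (fun j => 2 * INR j + 1) (fun j => 2 * INR j + 1 * 1)) by (intros; ring).
  rewrite binom_mean_lin, binom_mean_1. pose proof (binom_mean_id m).
  rewrite S_INR. simpl pow. nra.
Qed.

Lemma binom_mean_var m : binom_mean m (fun j => (2 * INR j - INR m) ^ 2) = INR m * 2 ^ m.
Proof.
  rewrite (binom_mean_ext m _ (fun j => 4 * (INR j * INR j) + 1 * ((- 4 * INR m) * INR j + (INR m * INR m) * 1)))
    by (intros; ring).
  rewrite !binom_mean_lin, binom_mean_1.
  pose proof (binom_mean_id m). pose proof (binom_mean_sq m). nra.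
Qed.

Lemma binom_row_sum m L : (m < L)%nat -> sum_lt (binom m) L = 2 ^ m.
Proof.
  intros H. rewrite (sum_lt_trunc _ m L); [|intros; apply binom_gt; lia|lia].
  rewrite <- binom_mean_1. apply sum_lt_ext. intros; ring.
Qed.

(* Pascal's rule turns a sum over one parity class of row [S m] into the whole row [m]. *)
Lemma binom_parity_sum M r L :
  (1 <= M)%nat -> (r < 2)%nat -> (M <= L)%nat -> 2 * sum_lt (fun i => binom M (r + 2 * i)) L = 2 ^ M.
Proof.
  intros HM Hr HL. destruct M as [|m]; [lia|]. destruct r as [|[|r]]; [| |lia].
  - destruct L as [|L]; [lia|]. rewrite sum_lt_Sr. simpl (binom (S m) (0 + 2 * 0)).
    rewrite (sum_lt_ext _ (fun i => binom m (2 * i + 1) + binom m (2 * i + 2))).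
    2:{ intros j _. replace (0 + 2 * S j)%nat with (S (2 * j + 1)) by lia.
        rewrite binom_SS. do 2 f_equal. lia. }
    rewrite <- (binom_0r m) at 1. rewrite <- sum_lt_double_S, binom_row_sum by lia.
    simpl. lra.
  - rewrite (sum_lt_ext _ (fun i => binom m (2 * i) + binom m (2 * i + 1))).
    2:{ intros j _. simpl. do 2 f_equal. lia. }
    rewrite <- sum_lt_double, binom_row_sum by lia. simpl. lra.
Qed.

Lemma sum_lt_parity_le g r L :
  (r < 2)%nat -> (forall j, 0 <= g j) -> sum_lt (fun i => g (r + 2 * i)%nat) L <= sum_lt g (2 * L).
Proof.
  intros Hr Hg. rewrite sum_lt_double. apply sum_lt_le. intros j _.
  pose proof (Hg (2 * j)%nat). pose proof (Hg (2 * j + 1)%nat).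
  destruct r as [|[|r]]; [rewrite Nat.add_0_l|replace (1 + 2 * j)%nat with (2 * j + 1)%nat by lia|lia]; lra.
Qed.

(* Chebyshev's inequality for a parity class of a binomial row. *)
Lemma binom_parity_tail m r K L D :
  (r < 2)%nat -> (K <= L)%nat -> (m < 2 * L)%nat -> 0 < D ->
  (forall i, (K <= i)%nat -> D <= 2 * INR (r + 2 * i) - INR m) ->
  sum_lt (fun i => binom m (r + 2 * i)) L - sum_lt (fun i => binom m (r + 2 * i)) K <= INR m * 2 ^ m / D ^ 2.
Proof.
  intros Hr HKL Hm HD Hi.
  set (g := fun j => binom m j * (2 * INR j - INR m) ^ 2 / D ^ 2).
  assert (HD2 : 0 < D ^ 2) by (apply pow_lt; lra).
  assert (Hg : forall j, 0 <= g j).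
  { intros j. unfold g, Rdiv. apply Rmult_le_pos; [|apply Rlt_le, Rinv_0_lt_compat; lra].
    apply Rmult_le_pos; [apply binom_ge0|apply pow2_ge_0]. }
  assert (Hbound : forall i, (K <= i)%nat -> binom m (r + 2 * i) <= g (r + 2 * i)%nat).
  { intros i HKi. unfold g. specialize (Hi i HKi).
    assert (D ^ 2 <= (2 * INR (r + 2 * i) - INR m) ^ 2) by (apply pow_incr; lra).
    pose proof (binom_ge0 m (r + 2 * i)).
    apply (Rmult_le_reg_r (D ^ 2)); [lra|]. unfold Rdiv.
    rewrite Rmult_assoc, Rinv_l, Rmult_1_r by lra. nra. }
  replace L with (K + (L - K))%nat at 1 by lia. rewrite sum_lt_add.
  assert (T1 : sum_lt (fun i => binom m (r + 2 * (K + i))) (L - K)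
               <= sum_lt (fun i => g (r + 2 * (K + i))%nat) (L - K))
    by (apply sum_lt_le; intros; apply Hbound; lia).
  assert (T2 : sum_lt (fun i => g (r + 2 * (K + i))%nat) (L - K) <= sum_lt (fun i => g (r + 2 * i)%nat) L).
  { replace L with (K + (L - K))%nat at 2 by lia. rewrite sum_lt_add.
    assert (0 <= sum_lt (fun i => g (r + 2 * i)%nat) K) by (apply sum_lt_nonneg; auto). lra. }
  assert (T3 := sum_lt_parity_le g r L Hr Hg).
  assert (T4 : sum_lt g (2 * L) = INR m * 2 ^ m / D ^ 2).
  { rewrite (sum_lt_trunc g m); [|intros; unfold g; rewrite binom_gt by auto; lra|lia].
    rewrite <- binom_mean_var. unfold binom_mean, Rdiv. rewrite Rmult_comm, <- sum_lt_mult_l.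
    apply sum_lt_ext. intros; unfold g, Rdiv; ring. }
  lra.
Qed.

(* The binomial(3n-9, 1/2) law is concentrated on [0, 2n-4] (mean 3n/2, deviation O(sqrt n)). *)
Lemma binom_parity_bulk n r :
  (24 <= n)%nat -> (r < 2)%nat ->
  3 / 8 * 2 ^ (3 * n - 9) <= sum_lt (fun i => binom (3 * n - 9) (r + 2 * i)) (n - 2).
Proof.
  intros Hn Hr. set (m := (3 * n - 9)%nat).
  assert (Hn' : 24 <= INR n) by (replace 24 with (INR 24) by (simpl; lra); now apply le_INR).
  assert (Full := binom_parity_sum m r m ltac:(unfold m; lia) Hr ltac:(lia)).
  assert (Tail : sum_lt (fun i => binom m (r + 2 * i)) m - sum_lt (fun i => binom m (r + 2 * i)) (n - 2)
                 <= INR m * 2 ^ m / (INR n + 1) ^ 2).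
  { apply binom_parity_tail; [exact Hr|unfold m; lia|unfold m; lia|lra|].
    intros i Hi. unfold m. rewrite <- S_INR.
    replace (2 * INR (r + 2 * i)) with (INR (2 * (r + 2 * i))) by (rewrite mult_INR; simpl; ring).
    rewrite <- minus_INR by lia. apply le_INR. lia. }
  assert (Hm : INR m * 2 ^ m / (INR n + 1) ^ 2 <= 1 / 8 * 2 ^ m).
  { assert (Em : INR m = 3 * INR n - 9)
      by (unfold m; rewrite minus_INR by lia; rewrite mult_INR; simpl; ring).
    assert (P2 : 0 < 2 ^ m) by (apply pow_lt; lra).
    apply (Rmult_le_reg_r ((INR n + 1) ^ 2)); [apply pow_lt; lra|].
    unfold Rdiv. rewrite Rmult_assoc, Rinv_l, Rmult_1_r by (apply pow_nonzero; lra).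
    rewrite Em, (Rmult_comm (1 / 8)), Rmult_assoc, (Rmult_comm (3 * INR n - 9)).
    apply Rmult_le_compat_l; [lra|]. simpl. nra. }
  lra.
Qed.

Definition multichoose (s h : nat) : R :=
  match s with
  | O => if Nat.eqb h 0 then 1 else 0
  | S s' => binom (h + s') h
  end.

Lemma multichoose_n0 s : multichoose s 0 = 1.
Proof. destruct s; simpl; auto. apply binom_0r. Qed.

Lemma multichoose_0S h : multichoose 0 (S h) = 0.
Proof. reflexivity. Qed.

Lemma multichoose_1n h : multichoose 1 h = 1.
Proof. cbn [multichoose]. rewrite Nat.add_0_r. apply binom_diag. Qed.

Lemma multichoose_SS s h : multichoose (S s) (S h) = multichoose (S s) h + multichoose s (S h).
Proof.
  destruct s; cbn [multichoose].
  - rewrite !Nat.add_0_r, !binom_diag. simpl. lra.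
  - replace (S h + S s)%nat with (S (h + S s)) by lia. rewrite binom_SS.
    replace (S h + s)%nat with (h + S s)%nat by lia. lra.
Qed.

Lemma multichoose_ge0 s h : 0 <= multichoose s h.
Proof. destruct s; simpl; [destruct (Nat.eqb h 0); lra|apply binom_ge0]. Qed.

Lemma multichoose_le s s' h : (s <= s')%nat -> multichoose s h <= multichoose s' h.
Proof.
  intros Hs. induction Hs as [|s' _ IH]; [lra|]. eapply Rle_trans; [exact IH|].
  destruct s'; cbn [multichoose].
  - rewrite Nat.add_0_r, binom_diag. destruct (Nat.eqb h 0); lra.
  - replace (h + S s')%nat with (S (h + s')) by lia. apply binom_le_Sn.
Qed.

Lemma multichoose_1_ge1 s : (1 <= s)%nat -> 1 <= multichoose s 1.
Proof.
  intros Hs. destruct s; [lia|]. cbn [multichoose Nat.add].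
  rewrite binom_SS, binom_0r. pose proof (binom_ge0 s 1). lra.
Qed.

Lemma multichoose_ge_binom m s h : (m - h < s)%nat -> binom m h <= multichoose s h.
Proof.
  intros Hs. destruct (Nat.le_gt_cases h m).
  - eapply Rle_trans; [|apply (multichoose_le (S (m - h)))]; [|lia].
    cbn [multichoose]. replace (h + (m - h))%nat with m by lia. lra.
  - rewrite binom_gt by assumption. apply multichoose_ge0.
Qed.

Lemma state_eqb_spec x y : state_eqb x y = true <-> x = y.
Proof.
  destruct x as [b i], y as [b' i']. unfold state_eqb; simpl.
  rewrite Bool.andb_true_iff, Nat.eqb_eq. split.
  - intros [H1 ->]. apply Bool.eqb_prop in H1. now subst.
  - intros [= -> ->]. split; [apply Bool.eqb_reflx|reflexivity].
Qed.

Lemma state_eqb_refl x : state_eqb x x = true.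
Proof. now apply state_eqb_spec. Qed.

Lemma state_eqb_sym x y : state_eqb x y = state_eqb y x.
Proof.
  destruct (state_eqb y x) eqn:E.
  - apply state_eqb_spec in E as ->. apply state_eqb_refl.
  - destruct (state_eqb x y) eqn:E'; [apply state_eqb_spec in E' as ->|reflexivity].
    now rewrite state_eqb_refl in E.
Qed.

Lemma in_states n b i : In (b, i) (states n) <-> (1 <= i <= n)%nat.
Proof.
  unfold states. rewrite in_app_iff, !in_map_iff. split.
  - intros [[k [[= <- <-] Hk]]|[k [[= <- <-] Hk]]]; apply in_seq in Hk; lia.
  - intros H. destruct b; [right|left]; exists i; split; auto; apply in_seq; lia.
Qed.

Lemma states_nodup n : NoDup (states n).
Proof.
  unfold states. apply NoDup_app.
  - apply NoDup_map_NoDup_ForallPairs; [intros a b _ _ [= ->]; auto|apply seq_NoDup].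
  - apply NoDup_map_NoDup_ForallPairs; [intros a b _ _ [= ->]; auto|apply seq_NoDup].
  - intros a Ha Hb. apply in_map_iff in Ha as [k [<- _]]. apply in_map_iff in Hb as [k' [[=] _]].
Qed.

Lemma states_length n : length (states n) = (2 * n)%nat.
Proof. unfold states. rewrite length_app, !length_map, length_seq. lia. Qed.

Lemma rsum_states_indicator n s g :
  In s (states n) -> rsum (states n) (fun y => if state_eqb s y then g y else 0) = g s.
Proof.
  intros Hs. rewrite <- (rsum_indicator _ _ state_eqb_spec s g (states_nodup n) Hs).
  apply rsum_ext. intros y _. now rewrite state_eqb_sym.
Qed.

Lemma Kpow_0 n U x y : Kpow n U 0 x y = if state_eqb x y then 1 else 0.
Proof. reflexivity. Qed.

Lemma Kpow_S n U t x y : Kpow n U (S t) x y = rsum (states n) (fun z => Kpow n U t x z * Kp n U z y).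
Proof. reflexivity. Qed.

Definition row_dist (n U : nat) (pi : state -> R) (x : state) (t : nat) : R :=
  rsum (states n) (fun y => Rabs (Kpow n U t x y - pi y)).

Section Chain.
Variables (n U : nat).
Hypothesis Hn : (3 <= n)%nat.
Hypothesis HU : (3 <= U)%nat.

Lemma INR_U_ge3 : 3 <= INR U.
Proof. replace 3 with (INR 3) by (simpl; lra). now apply le_INR. Qed.

Lemma inv_U_bounds : 0 < 1 / INR U <= 1 / 3.
Proof.
  pose proof INR_U_ge3. split; [apply Rdiv_lt_0_compat; lra|].
  unfold Rdiv. rewrite !Rmult_1_l. apply Rinv_le_contravar; lra.
Qed.

Lemma Kp_ge0 x y : 0 <= Kp n U x y.
Proof.
  pose proof inv_U_bounds.
  assert (0 < 1 / (2 * INR U)) by (apply Rdiv_lt_0_compat; pose proof INR_U_ge3; lra).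
  assert (Hind : forall b p, 0 <= p -> 0 <= Defs.ind b p) by (intros [] p Hp; simpl; lra).
  unfold Kp. destruct (fst x); destruct (Nat.eqb _ 1); try destruct (Nat.eqb _ n);
    repeat apply Rplus_le_le_0_compat; apply Hind; nra.
Qed.

Lemma Kp_row_sum x : In x (states n) -> rsum (states n) (fun y => Kp n U x y) = 1.
Proof.
  destruct x as [b i]. intros Hx. apply in_states in Hx. pose proof INR_U_ge3.
  assert (Hind : forall s p, In s (states n) -> rsum (states n) (fun y => Defs.ind (state_eqb y s) p) = p).
  { intros s p Hs. etransitivity; [|apply (rsum_states_indicator n s (fun _ => p) Hs)].
    apply rsum_ext. intros y _. rewrite state_eqb_sym. now destruct (state_eqb s y). }
  unfold Kp; simpl. destruct b; destruct (Nat.eqb_spec i 1); try destruct (Nat.eqb_spec i n);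
    rewrite ?rsum_plus, ?Hind; try (apply in_states; lia); field; lra.
Qed.

Lemma Kpow_ge0 t x y : 0 <= Kpow n U t x y.
Proof.
  revert y. induction t; intros y; [simpl; destruct (state_eqb x y); lra|].
  apply rsum_nonneg. intros. apply Rmult_le_pos; auto using Kp_ge0.
Qed.

Lemma Kpow_row_sum t x : In x (states n) -> rsum (states n) (fun y => Kpow n U t x y) = 1.
Proof.
  intros Hx. induction t.
  - apply (rsum_states_indicator n x (fun _ => 1) Hx).
  - rewrite <- IHt. cbn [Kpow]. rewrite rsum_comm. apply rsum_ext. intros z Hz.
    rewrite rsum_mult_l, Kp_row_sum by assumption. lra.
Qed.

Lemma Kpow_add t s x y :
  In y (states n) -> Kpow n U (t + s) x y = rsum (states n) (fun z => Kpow n U t x z * Kpow n U s z y).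
Proof.
  revert y. induction s; intros y Hy.
  - rewrite Nat.add_0_r. symmetry. rewrite <- (rsum_indicator _ _ state_eqb_spec y (Kpow n U t x) (states_nodup n) Hy).
    apply rsum_ext. intros z _. rewrite Kpow_0. destruct (state_eqb z y); lra.
  - rewrite Nat.add_succ_r, Kpow_S.
    rewrite (rsum_ext _ _ (fun w => rsum (states n) (fun z => Kpow n U t x z * Kpow n U s z w * Kp n U w y)))
      by (intros w Hw; rewrite IHs, <- rsum_mult_r by assumption; reflexivity).
    rewrite rsum_comm. apply rsum_ext. intros z _.
    rewrite Kpow_S, <- rsum_mult_l. apply rsum_ext. intros; lra.
Qed.

Lemma stationary_Kpow pi s y :
  stationary n U pi -> In y (states n) -> rsum (states n) (fun x => pi x * Kpow n U s x y) = pi y.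
Proof.
  intros [_ [_ Hinv]]. revert y. induction s; intros y Hy.
  - rewrite <- (rsum_indicator _ _ state_eqb_spec y pi (states_nodup n) Hy).
    apply rsum_ext. intros x _. rewrite Kpow_0. destruct (state_eqb x y); lra.
  - rewrite (rsum_ext _ _ (fun x => rsum (states n) (fun z => pi x * Kpow n U s x z * Kp n U z y)))
      by (intros; rewrite Kpow_S, <- rsum_mult_l; apply rsum_ext; intros; lra).
    rewrite rsum_comm, <- (Hinv y Hy). apply rsum_ext. intros z Hz.
    rewrite rsum_mult_r, IHs by assumption. reflexivity.
Qed.

(* Doeblin's argument: subtracting the uniform floor [beta] from [K^T] leaves a
   kernel of total row mass [1 - 2 n beta], and [pi] is invariant. *)
Lemma row_dist_doeblin pi x t T beta :
  stationary n U pi -> In x (states n) -> 0 <= beta ->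
  (forall z y, In z (states n) -> In y (states n) -> beta <= Kpow n U T z y) ->
  row_dist n U pi x (t + T) <= (1 - 2 * INR n * beta) * row_dist n U pi x t.
Proof.
  intros Hst Hx Hb Hlow. pose proof Hst as [_ [Hpi1 _]]. unfold row_dist.
  set (d z := Kpow n U t x z - pi z).
  assert (E : forall y, In y (states n) ->
             Kpow n U (t + T) x y - pi y = rsum (states n) (fun z => d z * (Kpow n U T z y - beta))).
  { intros y Hy. rewrite Kpow_add by assumption.
    rewrite (rsum_ext _ (fun z => d z * (Kpow n U T z y - beta))
               (fun z => Kpow n U t x z * Kpow n U T z y - pi z * Kpow n U T z y - d z * beta))
      by (intros; unfold d; ring).
    rewrite !rsum_minus, (stationary_Kpow pi T y), rsum_mult_r by assumption. unfold d.
    rewrite rsum_minus, Kpow_row_sum, Hpi1 by assumption. ring. }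
  eapply Rle_trans.
  { apply rsum_le. intros y Hy. rewrite E by assumption. apply rsum_abs_le. }
  rewrite rsum_comm, <- rsum_mult_l. apply rsum_le. intros z Hz.
  rewrite (rsum_ext _ _ (fun y => Rabs (d z) * (Kpow n U T z y - beta))).
  2:{ intros y Hy. rewrite Rabs_mult, (Rabs_right (Kpow n U T z y - beta)); [reflexivity|].
      specialize (Hlow z y Hz Hy). lra. }
  rewrite rsum_mult_l, rsum_minus, Kpow_row_sum, rsum_const, states_length, mult_INR by assumption.
  unfold d. simpl (INR 2). lra.
Qed.

End Chain.

(* The chain moves along the cycle of positions [0 .. 2n-1]: position [p < n] is
   state [p+1] and position [p >= n] is state [(2n-p)'].  Apart from holding, a
   step advances one position or jumps [i -> (i+1)'] resp. [i' -> i-1], which is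
   the reflection [p -> 2n-2-p] (taken mod 2n). *)
Definition cyc (n p : nat) : state :=
  if Nat.ltb p n then (false, S p) else (true, (2 * n - p)%nat).

Definition cyc_add (n p k : nat) : nat :=
  if Nat.ltb (p + k) (2 * n) then (p + k)%nat else (p + k - 2 * n)%nat.

Definition cyc_pred (n p : nat) : nat := if Nat.eqb p 0 then (2 * n - 1)%nat else (p - 1)%nat.

Definition cyc_refl (n p : nat) : nat :=
  if Nat.ltb p (2 * n - 1) then (2 * n - 2 - p)%nat else (2 * n - 1)%nat.

(* The four positions of states [1], [n], [n'], [1'], where the chain does not hold. *)
Definition boundary (n p : nat) : bool :=
  (Nat.eqb p 0 || Nat.eqb p (n - 1) || Nat.eqb p n || Nat.eqb p (2 * n - 1))%bool.

Definition hold_w (n p : nat) : R := if boundary n p then 0 else 1 / 2.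
Definition adv_w (U : nat) : R := (1 - 1 / INR U) / 2.
Definition jump_w (U : nat) : R := 1 / (2 * INR U).

Ltac case_nat :=
  repeat match goal with
  | |- context [Nat.ltb ?a ?b] => destruct (Nat.ltb_spec a b)
  | |- context [Nat.eqb ?a ?b] => destruct (Nat.eqb_spec a b)
  | H : context [Nat.ltb ?a ?b] |- _ => destruct (Nat.ltb_spec a b)
  | H : context [Nat.eqb ?a ?b] |- _ => destruct (Nat.eqb_spec a b)
  end.

Section Cycle.
Variable n : nat.

Lemma cyc_in p : (p < 2 * n)%nat -> In (cyc n p) (states n).
Proof. intros. unfold cyc. destruct (Nat.ltb_spec p n); apply in_states; lia. Qed.

Lemma cyc_inj p q : (p < 2 * n)%nat -> (q < 2 * n)%nat -> cyc n p = cyc n q -> p = q.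
Proof. unfold cyc. intros Hp Hq E. case_nat; injection E; lia. Qed.

Lemma cyc_surj s : In s (states n) -> exists p, (p < 2 * n)%nat /\ s = cyc n p.
Proof.
  destruct s as [[] i]; intros H; apply in_states in H.
  - exists (2 * n - i)%nat. unfold cyc. case_nat; split; try f_equal; lia.
  - exists (i - 1)%nat. unfold cyc. case_nat; split; try f_equal; lia.
Qed.

Lemma cyc_add_0 p : (p < 2 * n)%nat -> cyc_add n p 0 = p.
Proof. unfold cyc_add. case_nat; lia. Qed.

Lemma cyc_add_lt p k : (p < 2 * n)%nat -> (k < 2 * n)%nat -> (cyc_add n p k < 2 * n)%nat.
Proof. unfold cyc_add. case_nat; lia. Qed.

Lemma cyc_add_inj p a b :
  (p < 2 * n)%nat -> (a < 2 * n)%nat -> (b < 2 * n)%nat -> cyc_add n p a = cyc_add n p b -> a = b.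
Proof. unfold cyc_add. case_nat; lia. Qed.

Lemma cyc_pred_lt p : (p < 2 * n)%nat -> (cyc_pred n p < 2 * n)%nat.
Proof. unfold cyc_pred. case_nat; lia. Qed.

Lemma cyc_pred_neq p : (p < 2 * n)%nat -> cyc_pred n p <> p.
Proof. unfold cyc_pred. case_nat; lia. Qed.

Lemma cyc_add_pred p : (p < 2 * n)%nat -> cyc_add n (cyc_pred n p) 1 = p.
Proof. unfold cyc_add, cyc_pred. case_nat; lia. Qed.

Lemma cyc_pred_add_S p k :
  (p < 2 * n)%nat -> (S k < 2 * n)%nat -> cyc_pred n (cyc_add n p (S k)) = cyc_add n p k.
Proof. unfold cyc_add, cyc_pred. case_nat; lia. Qed.

Lemma cyc_refl_lt p : (p < 2 * n)%nat -> (cyc_refl n p < 2 * n)%nat.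
Proof. unfold cyc_refl. case_nat; lia. Qed.

Lemma cyc_refl_invol p : (p < 2 * n)%nat -> cyc_refl n (cyc_refl n p) = p.
Proof. unfold cyc_refl. case_nat; lia. Qed.

Lemma cyc_refl_neq_pred p : (p < 2 * n)%nat -> cyc_refl n p <> cyc_pred n p.
Proof. unfold cyc_refl, cyc_pred. case_nat; lia. Qed.

Lemma cyc_refl_fixed_boundary p : (p < 2 * n)%nat -> cyc_refl n p = p -> boundary n p = true.
Proof.
  unfold cyc_refl, boundary. intros Hp E.
  destruct (Nat.ltb_spec p (2 * n - 1)).
  - replace p with (n - 1)%nat by lia. now rewrite Nat.eqb_refl, !Bool.orb_true_r.
  - replace p with (2 * n - 1)%nat by lia. now rewrite Nat.eqb_refl, !Bool.orb_true_r.
Qed.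

End Cycle.

Section CycleKernel.
Variables n U : nat.
Hypothesis Hn : (3 <= n)%nat.
Hypothesis HU : (3 <= U)%nat.

Lemma jump_w_pos : 0 < jump_w U.
Proof. pose proof (INR_U_ge3 U HU). apply Rdiv_lt_0_compat; lra. Qed.

Lemma adv_w_ge0 : 0 <= adv_w U.
Proof. pose proof (inv_U_bounds U HU). unfold adv_w. lra. Qed.

Lemma hold_w_ge0 p : 0 <= hold_w n p.
Proof. unfold hold_w. destruct (boundary n p); lra. Qed.

Ltac Kp_cyc :=
  unfold Kp, Defs.ind, state_eqb, cyc, cyc_add, cyc_refl, boundary, hold_w, adv_w, jump_w in *;
  cbn [fst snd] in *;
  repeat (match goal with
          | |- context [Nat.ltb ?a ?b] => destruct (Nat.ltb_spec a b)
          | H : context [Nat.ltb ?a ?b] |- _ => destruct (Nat.ltb_spec a b)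
          | H : context [Nat.eqb ?a ?b] |- _ => destruct (Nat.eqb_spec a b)
          | |- context [Nat.eqb ?a ?b] => destruct (Nat.eqb_spec a b)
          end; cbn [fst snd orb] in *; try lia); simpl; try lia.

Lemma Kp_cyc_advance p : (p < 2 * n)%nat -> adv_w U <= Kp n U (cyc n p) (cyc n (cyc_add n p 1)).
Proof. intros Hp. pose proof (inv_U_bounds U HU). Kp_cyc; lra. Qed.

Lemma Kp_cyc_hold p : (p < 2 * n)%nat -> hold_w n p <= Kp n U (cyc n p) (cyc n p).
Proof.
  intros Hp. unfold hold_w. destruct (boundary n p) eqn:Hb; [now apply Kp_ge0|].
  pose proof (inv_U_bounds U HU). unfold boundary in Hb. rewrite !Bool.orb_false_iff in Hb.
  destruct Hb as [[[B1 B2] B3] B4]. apply Nat.eqb_neq in B1, B2, B3, B4. Kp_cyc; lra.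
Qed.

Lemma Kp_cyc_jump p : (p < 2 * n)%nat -> jump_w U <= Kp n U (cyc n p) (cyc n (cyc_refl n p)).
Proof.
  intros Hp. pose proof (inv_U_bounds U HU) as [U1 _].
  assert (1 / (2 * INR U) = 1 / 2 * (1 / INR U)) by (field; pose proof (INR_U_ge3 U HU); lra).
  Kp_cyc; lra.
Qed.

(* One step of the chain, restricted to the three moves into [p]; when [p] is a
   fixed point of the reflection it is a boundary position and [hold_w] vanishes. *)
Lemma Kpow_S_ge_cyc x t p : (p < 2 * n)%nat ->
  hold_w n p * Kpow n U t x (cyc n p) + adv_w U * Kpow n U t x (cyc n (cyc_pred n p))
  + jump_w U * Kpow n U t x (cyc n (cyc_refl n p)) <= Kpow n U (S t) x (cyc n p).
Proof.
  intros Hp. rewrite Kpow_S.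
  set (F z := Kpow n U t x z * Kp n U z (cyc n p)).
  assert (HF : forall z, In z (states n) -> 0 <= F z)
    by (intros; apply Rmult_le_pos; [apply Kpow_ge0|apply Kp_ge0]; assumption).
  pose proof (cyc_pred_lt n p Hp) as Hq. pose proof (cyc_refl_lt n p Hp) as Hr.
  pose proof jump_w_pos. pose proof adv_w_ge0. pose proof (hold_w_ge0 p).
  pose proof (Kpow_ge0 n U HU t x (cyc n p)). pose proof (Kpow_ge0 n U HU t x (cyc n (cyc_pred n p))).
  assert (Fp : hold_w n p * Kpow n U t x (cyc n p) <= F (cyc n p))
    by (unfold F; rewrite Rmult_comm; apply Rmult_le_compat_l, Kp_cyc_hold; auto).
  assert (Fq : adv_w U * Kpow n U t x (cyc n (cyc_pred n p)) <= F (cyc n (cyc_pred n p))).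
  { unfold F. rewrite Rmult_comm. apply Rmult_le_compat_l; auto.
    rewrite <- (cyc_add_pred n p Hp) at 2. now apply Kp_cyc_advance. }
  assert (Fr : jump_w U * Kpow n U t x (cyc n (cyc_refl n p)) <= F (cyc n (cyc_refl n p))).
  { unfold F. rewrite Rmult_comm. apply Rmult_le_compat_l; [now apply Kpow_ge0|].
    rewrite <- (cyc_refl_invol n p Hp) at 2. now apply Kp_cyc_jump. }
  assert (Npq : cyc n p <> cyc n (cyc_pred n p))
    by (intros E; apply cyc_inj in E; auto; now apply (cyc_pred_neq n p)).
  destruct (Nat.eq_dec (cyc_refl n p) p) as [Efix|Enf].
  - assert (Hb := cyc_refl_fixed_boundary n p Hp Efix). unfold hold_w in *. rewrite Hb in *.
    rewrite Efix in Fr |- *.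
    enough (F (cyc n p) + F (cyc n (cyc_pred n p)) <= rsum (states n) F) by lra.
    replace (F (cyc n p) + F (cyc n (cyc_pred n p))) with (rsum [cyc n p; cyc n (cyc_pred n p)] F)
      by (rewrite !rsum_cons, rsum_nil; lra).
    apply rsum_incl_le; auto.
    + repeat constructor; simpl; intuition.
    + intros z [<-|[<-|[]]]; now apply cyc_in; auto using cyc_pred_lt, cyc_refl_lt.
  - enough (F (cyc n p) + F (cyc n (cyc_pred n p)) + F (cyc n (cyc_refl n p)) <= rsum (states n) F) by lra.
    replace (F (cyc n p) + F (cyc n (cyc_pred n p)) + F (cyc n (cyc_refl n p)))
      with (rsum [cyc n p; cyc n (cyc_pred n p); cyc n (cyc_refl n p)] F)
      by (rewrite !rsum_cons, rsum_nil; lra).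
    apply rsum_incl_le; auto.
    + pose proof (cyc_refl_neq_pred n p Hp). pose proof (cyc_pred_neq n p Hp).
      repeat (apply NoDup_cons; [simpl; intros E; repeat destruct E as [E|E];
                                 try contradiction; apply cyc_inj in E; auto; lia|]).
      constructor.
    + intros z [<-|[<-|[<-|[]]]]; now apply cyc_in; auto using cyc_pred_lt, cyc_refl_lt.
Qed.

End CycleKernel.

(* The places where a path advancing through [p, p+1, ..., p+k] can hold. *)
Definition slots (n p k : nat) : nat :=
  length (filter (fun q => negb (boundary n q)) (map (cyc_add n p) (seq 0 (S k)))).

Section Slots.
Variable n : nat.

Lemma slots_0 p : (p < 2 * n)%nat -> slots n p 0 = if boundary n p then 0%nat else 1%nat.
Proof. intros Hp. unfold slots. simpl. rewrite cyc_add_0 by lia. now destruct (boundary n p). Qed.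

Lemma slots_S p k :
  slots n p (S k) = (slots n p k + if boundary n (cyc_add n p (S k)) then 0 else 1)%nat.
Proof.
  unfold slots. rewrite (seq_S (S k)), map_app, filter_app, length_app. simpl.
  now destruct (boundary n (cyc_add n p (S k))).
Qed.

(* Only four positions are boundary ones, and the positions [p + j] are distinct. *)
Lemma slots_lower p k : (p < 2 * n)%nat -> (k < 2 * n)%nat -> (k <= slots n p k + 3)%nat.
Proof.
  intros Hp Hk. unfold slots. set (l := map (cyc_add n p) (seq 0 (S k))).
  assert (Hl := filter_length (boundary n) l). unfold l at 3 in Hl.
  rewrite length_map, length_seq in Hl.
  enough (length (filter (boundary n) l) <= length [0; n - 1; n; 2 * n - 1])%nat by (simpl in *; lia).
  apply NoDup_incl_length.
  - apply NoDup_filter, NoDup_map_NoDup_ForallPairs; [|apply seq_NoDup].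
    intros a b Ha Hb. apply in_seq in Ha, Hb. apply cyc_add_inj; lia.
  - intros q Hq. apply filter_In in Hq as [_ Hq]. unfold boundary in Hq.
    rewrite !Bool.orb_true_iff, !Nat.eqb_eq in Hq. simpl. intuition.
Qed.

Lemma slots_pos p k : (3 <= n)%nat -> (p < 2 * n)%nat -> (2 <= k)%nat -> (1 <= slots n p k)%nat.
Proof.
  intros Hn Hp Hk. induction Hk as [|k Hk IH]; [|rewrite slots_S; lia].
  rewrite !slots_S, slots_0 by assumption.
  destruct (boundary n p) eqn:B0, (boundary n (cyc_add n p 1)) eqn:B1,
    (boundary n (cyc_add n p 2)) eqn:B2; try lia.
  unfold boundary, cyc_add in *.
  destruct (Nat.ltb_spec (p + 1) (2 * n)), (Nat.ltb_spec (p + 2) (2 * n));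
    rewrite !Bool.orb_true_iff, !Nat.eqb_eq in *; lia.
Qed.

End Slots.

Definition adv_p (U : nat) : R := 1 - 1 / INR U.

(* Weight of a [t]-step path that advances [k] times. *)
Definition route_w (U t k : nat) : R := (/ 2) ^ t * adv_p U ^ k.

Section Routes.
Variable U : nat.
Hypothesis HU : (3 <= U)%nat.

Lemma route_w_ge0 t k : 0 <= route_w U t k.
Proof.
  pose proof (inv_U_bounds U HU). unfold route_w, adv_p.
  apply Rmult_le_pos; apply pow_le; lra.
Qed.

Lemma route_w_hold t k : route_w U (S t) k = / 2 * route_w U t k.
Proof. unfold route_w. simpl. ring. Qed.

Lemma route_w_adv t k : route_w U (S t) (S k) = adv_w U * route_w U t k.
Proof. unfold route_w, adv_w, adv_p. simpl. lra. Qed.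

Lemma jump_w_route t k : / INR U * route_w U (S t) k = jump_w U * route_w U t k.
Proof. unfold route_w, jump_w. pose proof (INR_U_ge3 U HU). simpl. field. lra. Qed.

Lemma route_w_anti t k k' : (k <= k')%nat -> route_w U t k' <= route_w U t k.
Proof.
  intros Hk. pose proof (inv_U_bounds U HU). unfold route_w, adv_p.
  apply Rmult_le_compat_l; [apply pow_le; lra|].
  induction Hk; [lra|]. simpl. pose proof (pow_le (1 - 1 / INR U) m ltac:(lra)). nra.
Qed.

End Routes.

(* A path reaching [P] at time [S t] either comes from its predecessor position
   (weight [w], route weight [R0]) or holds at [P] (possible only at a slot). *)
Lemma step_bound (b : bool) (w R R0 R1 VP Vq Vnew : R) (s h : nat) :
  0 <= w -> 0 <= VP -> R = w * R0 -> R = / 2 * R1 ->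
  (if b then 0 else 1 / 2) * VP + w * Vq <= Vnew ->
  R0 * multichoose s h <= Vq ->
  (b = false -> (1 <= h)%nat -> R1 * multichoose (S s) (h - 1) <= VP) ->
  R * multichoose (s + if b then 0 else 1) h <= Vnew.
Proof.
  intros Hw HVP E0 E1 Hstep Hq Hp. destruct b.
  - rewrite Nat.add_0_r, E0. nra.
  - rewrite Nat.add_1_r. destruct h as [|h].
    + rewrite !multichoose_n0 in *. rewrite E0. nra.
    + specialize (Hp eq_refl ltac:(lia)). rewrite Nat.sub_succ, Nat.sub_0_r in Hp.
      rewrite multichoose_SS. pose proof (multichoose_ge0 (S s) h). nra.
Qed.

Section Paths.
Variables (n U x : nat).
Hypothesis Hn : (3 <= n)%nat.
Hypothesis HU : (3 <= U)%nat.
Hypothesis Hx : (x < 2 * n)%nat.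

(* Lower bounds for the [t]-step transition probability from position [x] to
   position [p], counting only the paths without a jump, resp. the paths whose
   single jump leaves from position [q]. *)
Fixpoint nojump_w (t p : nat) : R :=
  match t with
  | O => if Nat.eqb p x then 1 else 0
  | S t' => hold_w n p * nojump_w t' p + adv_w U * nojump_w t' (cyc_pred n p)
  end.

Fixpoint onejump_w (q t p : nat) : R :=
  match t with
  | O => 0
  | S t' => hold_w n p * onejump_w q t' p + adv_w U * onejump_w q t' (cyc_pred n p)
            + (if Nat.eqb q (cyc_refl n p) then jump_w U * nojump_w t' q else 0)
  end.

Definition path_w (t p : nat) : R := nojump_w t p + sum_lt (fun q => onejump_w q t p) (2 * n).

Lemma nojump_w_ge0 t p : 0 <= nojump_w t p.
Proof.
  pose proof (adv_w_ge0 U HU). revert p; induction t; intros p; simpl.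
  - destruct (Nat.eqb p x); lra.
  - pose proof (hold_w_ge0 n p). pose proof (IHt p). pose proof (IHt (cyc_pred n p)). nra.
Qed.

Lemma onejump_w_ge0 q t p : 0 <= onejump_w q t p.
Proof.
  pose proof (adv_w_ge0 U HU). pose proof (jump_w_pos U HU).
  revert p; induction t; intros p; simpl; [lra|].
  pose proof (hold_w_ge0 n p). pose proof (IHt p). pose proof (IHt (cyc_pred n p)).
  pose proof (nojump_w_ge0 t q). destruct (Nat.eqb q (cyc_refl n p)); nra.
Qed.

Lemma nojump_w_le_path_w t p : nojump_w t p <= path_w t p.
Proof.
  unfold path_w. assert (0 <= sum_lt (fun q => onejump_w q t p) (2 * n))
    by (apply sum_lt_nonneg; intros; apply onejump_w_ge0). lra.
Qed.

Lemma path_w_S t p : (p < 2 * n)%nat ->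
  path_w (S t) p = hold_w n p * path_w t p + adv_w U * path_w t (cyc_pred n p)
                   + jump_w U * nojump_w t (cyc_refl n p).
Proof.
  intros Hp. unfold path_w. cbn [nojump_w onejump_w].
  rewrite !sum_lt_plus, !sum_lt_mult_l, (sum_lt_indicator (fun q => jump_w U * nojump_w t q))
    by now apply cyc_refl_lt.
  ring.
Qed.

Lemma Kpow_ge_path_w t p : (p < 2 * n)%nat -> path_w t p <= Kpow n U t (cyc n x) (cyc n p).
Proof.
  revert p. induction t; intros p Hp.
  - unfold path_w. simpl. rewrite sum_lt_0. destruct (Nat.eqb_spec p x) as [->|Hpx].
    + rewrite state_eqb_refl. lra.
    + destruct (state_eqb (cyc n x) (cyc n p)) eqn:E; [|lra].
      apply state_eqb_spec, cyc_inj in E; lia.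
  - rewrite path_w_S by assumption.
    eapply Rle_trans; [|now apply Kpow_S_ge_cyc].
    pose proof (hold_w_ge0 n p). pose proof (adv_w_ge0 U HU). pose proof (jump_w_pos U HU).
    pose proof (IHt p Hp). pose proof (IHt _ (cyc_pred_lt n p Hp)).
    pose proof (IHt _ (cyc_refl_lt n p Hp)). pose proof (nojump_w_le_path_w t (cyc_refl n p)).
    apply Rplus_le_compat; [apply Rplus_le_compat|]; apply Rmult_le_compat_l; lra.
Qed.

Lemma nojump_w_ge t k : (k <= t)%nat -> (k < 2 * n)%nat ->
  route_w U t k * multichoose (slots n x k) (t - k) <= nojump_w t (cyc_add n x k).
Proof.
  revert k. induction t; intros k Hk Hk2.
  - replace k with 0%nat by lia. rewrite cyc_add_0 by lia. simpl.
    rewrite Nat.eqb_refl, multichoose_n0. unfold route_w. lra.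
  - pose proof (adv_w_ge0 U HU). destruct k as [|k].
    + rewrite cyc_add_0, slots_0 by lia. cbn [nojump_w].
      assert (IH := IHt 0%nat ltac:(lia) Hk2). rewrite cyc_add_0, slots_0 in IH by lia.
      pose proof (nojump_w_ge0 t (cyc_pred n x)). pose proof (nojump_w_ge0 t x).
      rewrite route_w_hold. unfold hold_w. revert IH. destruct (boundary n x); intros IH.
      * rewrite Nat.sub_0_r, multichoose_0S. pose proof (route_w_ge0 U HU t 0). nra.
      * rewrite !multichoose_1n in *. nra.
    + rewrite slots_S. cbn [nojump_w]. rewrite Nat.sub_succ, cyc_pred_add_S by lia.
      apply (step_bound _ (adv_w U) _ (route_w U t k) (route_w U t (S k))
               (nojump_w t (cyc_add n x (S k))) (nojump_w t (cyc_add n x k)));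
        [lra|apply nojump_w_ge0|apply route_w_adv|apply route_w_hold|unfold hold_w; lra| |].
      * apply IHt; lia.
      * intros Hb Hh. assert (IH := IHt (S k) ltac:(lia) Hk2).
        rewrite slots_S, Hb, Nat.add_1_r in IH. now replace (t - k - 1)%nat with (t - S k)%nat by lia.
Qed.

Lemma onejump_w_ge t A1 A2 :
  (A1 < 2 * n)%nat -> (A2 < 2 * n)%nat -> (A1 + A2 + 1 <= t)%nat ->
  let q := cyc_add n x A1 in let r := cyc_refl n q in
  / INR U * route_w U t (A1 + A2) * multichoose (slots n x A1 + slots n r A2) (t - 1 - (A1 + A2))
  <= onejump_w q t (cyc_add n r A2).
Proof.
  intros HA1 HA2 Ht q r. pose proof (adv_w_ge0 U HU). pose proof (jump_w_pos U HU).
  assert (Hq : (q < 2 * n)%nat) by now apply cyc_add_lt.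
  assert (Hr : (r < 2 * n)%nat) by now apply cyc_refl_lt.
  assert (Hrr : cyc_refl n r = q) by now apply cyc_refl_invol.
  revert A2 HA2 Ht. induction t; intros A2 HA2 Ht; [lia|].
  destruct A2 as [|a].
  - rewrite Nat.add_0_r, cyc_add_0, slots_0 by assumption. cbn [onejump_w].
    rewrite Hrr, Nat.eqb_refl.
    replace (S t - 1 - A1)%nat with (t - A1)%nat by lia.
    pose proof (onejump_w_ge0 q t (cyc_pred n r)).
    apply (step_bound _ (jump_w U) _ (route_w U t A1) (/ INR U * route_w U t A1)
             (onejump_w q t r) (nojump_w t q));
      [lra|apply onejump_w_ge0|now apply jump_w_route|rewrite route_w_hold; ring
      |unfold hold_w; nra| |].
    + apply nojump_w_ge; lia.
    + intros Hb Hh. assert (IH := IHt 0%nat HA2 ltac:(lia)).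
      rewrite Nat.add_0_r, cyc_add_0, slots_0, Hb, Nat.add_1_r in IH by assumption.
      now replace (t - A1 - 1)%nat with (t - 1 - A1)%nat by lia.
  - rewrite slots_S. cbn [onejump_w]. rewrite cyc_pred_add_S by lia.
    replace (A1 + S a)%nat with (S (A1 + a)) by lia.
    replace (S t - 1 - S (A1 + a))%nat with (t - 1 - (A1 + a))%nat by lia.
    rewrite Nat.add_assoc.
    assert (0 <= if Nat.eqb q (cyc_refl n (cyc_add n r (S a))) then jump_w U * nojump_w t q else 0)
      by (destruct (Nat.eqb _ _); [apply Rmult_le_pos; [lra|apply nojump_w_ge0]|lra]).
    apply (step_bound _ (adv_w U) _ (/ INR U * route_w U t (A1 + a)) (/ INR U * route_w U t (S (A1 + a)))
             (onejump_w q t (cyc_add n r (S a))) (onejump_w q t (cyc_add n r a)));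
      [lra|apply onejump_w_ge0|rewrite route_w_adv; ring|rewrite route_w_hold; ring
      |unfold hold_w; lra| |].
    + apply IHt; lia.
    + intros Hb Hh. assert (IH := IHt (S a) HA2 ltac:(lia)).
      rewrite slots_S, Hb in IH.
      replace (slots n x A1 + (slots n r a + 1))%nat with (S (slots n x A1 + slots n r a)) in IH by lia.
      replace (A1 + S a)%nat with (S (A1 + a)) in IH by lia.
      now replace (t - 1 - (A1 + a) - 1)%nat with (t - 1 - S (A1 + a))%nat by lia.
Qed.

End Paths.

(* Advancing [a0 - i] steps from [x], jumping, then advancing [b0 - i] steps
   lands on [y]: the jump reflects the position, so only the difference
   [b0 - a0 = x + y + 2 (mod 2n)] matters, while the parity [r0] and [i] fix the
   number [r0 + 2 i] of holding steps in a path of length [3n - 1]. *)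
Lemma jump_routes n x y : (x < 2 * n)%nat -> (y < 2 * n)%nat ->
  exists r0 a0 b0 : nat, (r0 < 2)%nat /\ (n - 3 <= a0 < 2 * n)%nat /\ (n - 3 <= b0 < 2 * n)%nat /\
    (a0 + b0 + r0 = 3 * n - 2)%nat /\
    forall i, (i < n - 2)%nat -> cyc_add n (cyc_refl n (cyc_add n x (a0 - i))) (b0 - i) = y.
Proof.
  intros Hx Hy.
  assert (Hd : exists d, (d < 2 * n /\ (x + y + 2 = d \/ x + y + 2 = d + 2 * n \/ x + y + 2 = d + 4 * n))%nat).
  { destruct (Nat.lt_ge_cases (x + y + 2) (2 * n)); [exists (x + y + 2)%nat; lia|].
    destruct (Nat.lt_ge_cases (x + y + 2) (4 * n)); [exists (x + y + 2 - 2 * n)%nat|exists (x + y + 2 - 4 * n)%nat]; lia. }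
  destruct Hd as [d [Hd Hxy]].
  assert (Hhalf : forall m, exists h r0, (r0 < 2 /\ m = 2 * h + r0)%nat)
    by (intros m; exists (m / 2)%nat, (m mod 2)%nat; split; [apply Nat.mod_upper_bound; lia|apply Nat.div_mod; lia]).
  destruct (Nat.le_gt_cases d n).
  - destruct (Hhalf (3 * n - 2 - d)%nat) as [h [r0 [Hr0 Hm]]].
    exists r0, h, (h + d)%nat. repeat split; try lia.
    intros i Hi. unfold cyc_add, cyc_refl. case_nat; lia.
  - destruct (Hhalf (n - 2 + d)%nat) as [h [r0 [Hr0 Hm]]].
    exists r0, (h + (2 * n - d))%nat, h. repeat split; try lia.
    intros i Hi. unfold cyc_add, cyc_refl. case_nat; lia.
Qed.

Section Minorization.
Variables (n U : nat).
Hypothesis Hn : (3 <= n)%nat.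
Hypothesis HU : (3 <= U)%nat.

Lemma sum_onejump_le_Kpow x y T (f : nat -> nat) L :
  (x < 2 * n)%nat -> (y < 2 * n)%nat ->
  (forall i, (i < L)%nat -> (f i < 2 * n)%nat) ->
  (forall i j, (i < L)%nat -> (j < L)%nat -> f i = f j -> i = j) ->
  sum_lt (fun i => onejump_w n U x (f i) T y) L <= Kpow n U T (cyc n x) (cyc n y).
Proof.
  intros Hx Hy Hf Hinj.
  eapply Rle_trans; [|now apply Kpow_ge_path_w]. unfold path_w.
  assert (Hsum : sum_lt (fun i => onejump_w n U x (f i) T y) L
                 <= sum_lt (fun q => onejump_w n U x q T y) (2 * n)).
  { rewrite !sum_lt_rsum, <- (rsum_map f (seq 0 L) (fun q => onejump_w n U x q T y)).
    apply rsum_incl_le.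
    - apply NoDup_map_NoDup_ForallPairs; [|apply seq_NoDup].
      intros a b Ha Hb. apply in_seq in Ha, Hb. apply Hinj; lia.
    - intros q Hq. apply in_map_iff in Hq as [i [<- Hi]]. apply in_seq in Hi.
      apply in_seq. specialize (Hf i ltac:(lia)). lia.
    - intros. now apply onejump_w_ge0. }
  pose proof (nojump_w_ge0 n U x HU T y). lra.
Qed.

(* [s i] counts the slots along the [i]-th route; at most six of its
   [3n - 2 - r0 - 2i] advancing positions are boundary ones. *)
Lemma Kpow_ge_route_sum x y : (x < 2 * n)%nat -> (y < 2 * n)%nat ->
  exists r0 (s : nat -> nat), (r0 < 2)%nat /\
    (forall i, (i < n - 2)%nat -> (3 * n - 9 - (r0 + 2 * i) < s i)%nat) /\
    / INR U * route_w U (3 * n - 1) (3 * n - 1) * sum_lt (fun i => multichoose (s i) (r0 + 2 * i)) (n - 2)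
    <= Kpow n U (3 * n - 1) (cyc n x) (cyc n y).
Proof.
  intros Hx Hy. destruct (jump_routes n x y Hx Hy) as [r0 [a0 [b0 [Hr0 [Ha0 [Hb0 [Hab Hroute]]]]]]].
  set (q i := cyc_add n x (a0 - i)).
  exists r0, (fun i => slots n x (a0 - i) + slots n (cyc_refl n (q i)) (b0 - i))%nat.
  split; [exact Hr0|split].
  - intros i Hi. pose proof (slots_lower n x (a0 - i) Hx ltac:(lia)).
    assert (Hq : (q i < 2 * n)%nat) by (apply cyc_add_lt; lia).
    pose proof (slots_lower n (cyc_refl n (q i)) (b0 - i) (cyc_refl_lt n _ Hq) ltac:(lia)).
    destruct (Nat.le_gt_cases 2 (a0 - i)).
    + pose proof (slots_pos n x (a0 - i) Hn Hx ltac:(lia)). lia.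
    + pose proof (slots_pos n (cyc_refl n (q i)) (b0 - i) Hn (cyc_refl_lt n _ Hq) ltac:(lia)). lia.
  - eapply Rle_trans; [|apply (sum_onejump_le_Kpow x y _ q (n - 2) Hx Hy)].
    + rewrite <- sum_lt_mult_l. apply sum_lt_le. intros i Hi.
      rewrite <- (Hroute i Hi).
      eapply Rle_trans; [|apply onejump_w_ge; lia].
      replace (3 * n - 1 - 1 - (a0 - i + (b0 - i)))%nat with (r0 + 2 * i)%nat by lia.
      pose proof (route_w_anti U HU (3 * n - 1) (a0 - i + (b0 - i)) (3 * n - 1) ltac:(lia)).
      assert (0 < / INR U) by (apply Rinv_0_lt_compat; pose proof (INR_U_ge3 U HU); lra).
      apply Rmult_le_compat_r; [apply multichoose_ge0|]. apply Rmult_le_compat_l; lra.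
    + intros i Hi. apply cyc_add_lt; lia.
    + intros i j Hi Hj E. apply cyc_add_inj in E; lia.
Qed.

End Minorization.

(* For large [n] the routes carry a fixed fraction of the binomial mass; for small
   [n] the single route with [r0] holds suffices. *)
Lemma route_count_ge n r0 (s : nat -> nat) :
  (3 <= n)%nat -> (r0 < 2)%nat ->
  (forall i, (i < n - 2)%nat -> (3 * n - 9 - (r0 + 2 * i) < s i)%nat) ->
  2 ^ (3 * n - 9) * (/ 2) ^ 61 <= sum_lt (fun i => multichoose (s i) (r0 + 2 * i)) (n - 2).
Proof.
  intros Hn Hr0 HS.
  destruct (Nat.le_gt_cases 24 n) as [Hbig|Hsmall].
  - eapply Rle_trans; [|apply (sum_lt_le (fun i => binom (3 * n - 9) (r0 + 2 * i)))].
    + eapply Rle_trans; [|now apply binom_parity_bulk].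
      assert (0 < 2 ^ (3 * n - 9)) by (apply pow_lt; lra).
      assert ((/ 2) ^ 61 <= 3 / 8) by (simpl; lra). nra.
    + intros i Hi. apply multichoose_ge_binom, HS, Hi.
  - replace (n - 2)%nat with (S (n - 3)) by lia.
    eapply Rle_trans; [|apply sum_lt_head_le; intros; apply multichoose_ge0].
    assert (Hm : 1 <= multichoose (s 0%nat) (r0 + 2 * 0)).
    { specialize (HS 0%nat ltac:(lia)). rewrite Nat.add_0_r.
      destruct r0 as [|[|]]; [rewrite multichoose_n0; lra|apply multichoose_1_ge1; lia|lia]. }
    assert (2 ^ (3 * n - 9) <= 2 ^ 61) by (apply Rle_pow; [lra|lia]).
    assert (E : 2 ^ 61 * (/ 2) ^ 61 = 1) by (rewrite <- Rpow_mult_distr; replace (2 * / 2) with 1 by field; apply pow1).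
    assert (0 < (/ 2) ^ 61) by (apply pow_lt; lra). nra.
Qed.

Lemma Kpow_minorization n U z y : (3 <= n)%nat -> (3 <= U)%nat ->
  In z (states n) -> In y (states n) ->
  (/ 2) ^ 69 * adv_p U ^ (3 * n - 1) * / INR U <= Kpow n U (3 * n - 1) z y.
Proof.
  intros Hn HU Hz Hy.
  destruct (cyc_surj n z Hz) as [p [Hp ->]]. destruct (cyc_surj n y Hy) as [q [Hq ->]].
  destruct (Kpow_ge_route_sum n U Hn HU p q Hp Hq) as [r0 [s [Hr0 [Hs Hroute]]]].
  eapply Rle_trans; [|exact Hroute].
  pose proof (route_count_ge n r0 s Hn Hr0 Hs) as Hcount.
  assert (E : (/ 2) ^ (3 * n - 1) * (2 ^ (3 * n - 9) * (/ 2) ^ 61) = (/ 2) ^ 69).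
  { replace (3 * n - 1)%nat with (8 + (3 * n - 9))%nat by lia. rewrite pow_add.
    replace ((/ 2) ^ 8 * (/ 2) ^ (3 * n - 9) * (2 ^ (3 * n - 9) * (/ 2) ^ 61))
      with ((/ 2) ^ 8 * (/ 2) ^ 61 * ((/ 2) ^ (3 * n - 9) * 2 ^ (3 * n - 9))) by ring.
    rewrite <- Rpow_mult_distr, Rinv_l, pow1, <- pow_add by lra. simpl (8 + 61)%nat. ring. }
  pose proof (inv_U_bounds U HU).
  assert (0 <= / INR U * adv_p U ^ (3 * n - 1)).
  { unfold adv_p. apply Rmult_le_pos; [|apply pow_le]; unfold Rdiv in *; lra. }
  assert (0 <= (/ 2) ^ (3 * n - 1)) by (apply pow_le; lra).
  unfold route_w. rewrite <- E.
  replace (/ INR U * ((/ 2) ^ (3 * n - 1) * adv_p U ^ (3 * n - 1))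
           * sum_lt (fun i => multichoose (s i) (r0 + 2 * i)) (n - 2))
    with ((/ INR U * adv_p U ^ (3 * n - 1)) * ((/ 2) ^ (3 * n - 1)
          * sum_lt (fun i => multichoose (s i) (r0 + 2 * i)) (n - 2))) by ring.
  replace ((/ 2) ^ (3 * n - 1) * (2 ^ (3 * n - 9) * (/ 2) ^ 61) * adv_p U ^ (3 * n - 1) * / INR U)
    with ((/ INR U * adv_p U ^ (3 * n - 1)) * ((/ 2) ^ (3 * n - 1) * (2 ^ (3 * n - 9) * (/ 2) ^ 61)))
    by ring.
  apply Rmult_le_compat_l; [assumption|]. apply Rmult_le_compat_l; assumption.
Qed.

Lemma exp_le a b : a <= b -> exp a <= exp b.
Proof. intros [H| <-]; [left; now apply exp_increasing|lra]. Qed.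

(* [1 - 1/U >= exp (-1/(U-1))], and [3n / (U - 1) <= 6c] when [n <= c U]. *)
Lemma adv_p_pow_ge c n U T : (3 <= U)%nat -> INR n <= c * INR U -> (T <= 3 * n)%nat ->
  exp (- (6 * c)) <= adv_p U ^ T.
Proof.
  intros HU Hnc HT. pose proof (INR_U_ge3 U HU).
  set (a := 1 / (INR U - 1)).
  assert (Ha : 0 < a) by (unfold a; apply Rdiv_lt_0_compat; lra).
  assert (Hexp : exp (- a) <= adv_p U).
  { pose proof (exp_ineq1_le a). rewrite exp_Ropp. unfold adv_p.
    replace (1 - 1 / INR U) with (/ (1 + a)) by (unfold a; field; lra).
    apply Rinv_le_contravar; lra. }
  eapply Rle_trans; [|apply pow_incr; split; [left; apply exp_pos|exact Hexp]].
  assert (Hpow : forall k, exp (- a) ^ k = exp (- (INR k * a))).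
  { induction k; simpl; [now rewrite Rmult_0_l, Ropp_0, exp_0|].
    rewrite IHk, <- exp_plus. f_equal. destruct k; simpl; ring. }
  rewrite Hpow. apply exp_le.
  assert (HT' : INR T <= 3 * INR n) by (replace 3 with (INR 3) by (simpl; lra); rewrite <- mult_INR; now apply le_INR).
  assert (0 <= INR T) by apply pos_INR.
  assert (INR T * a <= 6 * c); [|lra].
  unfold a. replace (INR T * (1 / (INR U - 1))) with (INR T / (INR U - 1)) by (field; lra).
  apply (Rmult_le_reg_r (INR U - 1)); [lra|].
  unfold Rdiv. rewrite Rmult_assoc, Rinv_l, Rmult_1_r by lra. nra.
Qed.

Section Mixing.
Variables (n U : nat) (pi : state -> R).
Hypothesis Hn : (3 <= n)%nat.
Hypothesis HU : (3 <= U)%nat.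
Hypothesis Hst : stationary n U pi.

Lemma row_dist_0_le x : In x (states n) -> row_dist n U pi x 0 <= 2.
Proof.
  intros Hx. destruct Hst as [Hpi [Hpi1 _]]. unfold row_dist.
  eapply Rle_trans.
  - apply (rsum_le _ _ (fun y => (if state_eqb x y then 1 else 0) + pi y)).
    intros y Hy. specialize (Hpi y Hy). rewrite Kpow_0.
    destruct (state_eqb x y); unfold Rabs; destruct (Rcase_abs _); lra.
  - rewrite rsum_plus, Hpi1, (rsum_states_indicator n x (fun _ => 1) Hx). lra.
Qed.

Lemma row_dist_doeblin_iter x T beta k s :
  In x (states n) -> 0 <= beta -> 0 <= 1 - 2 * INR n * beta ->
  (forall z y, In z (states n) -> In y (states n) -> beta <= Kpow n U T z y) ->
  row_dist n U pi x (k * T + s) <= (1 - 2 * INR n * beta) ^ k * row_dist n U pi x s.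
Proof.
  intros Hx Hb Hr Hlow. induction k; [simpl; lra|].
  replace (S k * T + s)%nat with ((k * T + s) + T)%nat by lia.
  eapply Rle_trans; [now apply (row_dist_doeblin n U Hn HU pi x _ T beta)|]. simpl. nra.
Qed.

Lemma row_dist_le_2 x t : In x (states n) -> row_dist n U pi x t <= 2.
Proof.
  intros Hx. replace t with (t * 1 + 0)%nat by lia.
  eapply Rle_trans; [apply (row_dist_doeblin_iter x 1 0); auto; [lra|lra|intros; now apply Kpow_ge0]|].
  replace (1 - 2 * INR n * 0) with 1 by ring. rewrite pow1, Rmult_1_l. now apply row_dist_0_le.
Qed.

End Mixing.

Definition doeblin_g (c : R) : R := (/ 2) ^ 68 * exp (- (6 * c)) / c.

Lemma doeblin_g_bounds c : 1 <= c -> 0 < doeblin_g c <= 1.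
Proof.
  intros Hc.
  assert (0 < (/ 2) ^ 68 <= 1) by (split; [apply pow_lt; lra|rewrite <- (pow1 68); apply pow_incr; lra]).
  assert (0 < exp (- (6 * c)) <= 1) by (split; [apply exp_pos|rewrite <- exp_0; apply exp_le; lra]).
  unfold doeblin_g, Rdiv. split; [apply Rmult_lt_0_compat; [nra|apply Rinv_0_lt_compat; lra]|].
  apply (Rmult_le_reg_r c); [lra|]. rewrite Rmult_assoc, Rinv_l, Rmult_1_r; nra.
Qed.

Lemma Kpow_ge_uniform c n U z y : 1 <= c -> (3 <= n)%nat -> (3 <= U)%nat ->
  INR n / c <= INR U -> INR U <= c * INR n -> In z (states n) -> In y (states n) ->
  doeblin_g c / (2 * INR n) <= Kpow n U (3 * n - 1) z y.
Proof.
  intros Hc Hn HU Hnc HUc Hz Hy.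
  eapply Rle_trans; [|now apply Kpow_minorization].
  assert (Rn : 3 <= INR n) by (replace 3 with (INR 3) by (simpl; lra); now apply le_INR).
  pose proof (INR_U_ge3 U HU).
  assert (Hnc' : INR n <= c * INR U).
  { apply (Rmult_le_compat_r c) in Hnc; [|lra].
    unfold Rdiv in Hnc. rewrite Rmult_assoc, Rinv_l, Rmult_1_r in Hnc; lra. }
  pose proof (adv_p_pow_ge c n U (3 * n - 1) HU Hnc' ltac:(lia)).
  assert (Hu : / (c * INR n) <= / INR U) by (apply Rinv_le_contravar; nra).
  pose proof (exp_pos (- (6 * c))).
  assert (0 < / (c * INR n)) by (apply Rinv_0_lt_compat; nra).
  assert (0 < (/ 2) ^ 69) by (apply pow_lt; lra).
  replace (doeblin_g c / (2 * INR n)) with ((/ 2) ^ 69 * (exp (- (6 * c)) * / (c * INR n)))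
    by (unfold doeblin_g; simpl; field; lra).
  rewrite Rmult_assoc. apply Rmult_le_compat_l; [lra|].
  apply Rmult_le_compat; lra.
Qed.

Lemma nat_div_ge (t T : nat) (a : R) :
  (0 < T)%nat -> INR T * (a + 1) <= INR t -> a <= INR (t / T).
Proof.
  intros HT Ht.
  assert (Hlt : INR t < INR T * (INR (t / T) + 1)).
  { rewrite <- S_INR, <- mult_INR. apply lt_INR.
    pose proof (Nat.div_mod t T ltac:(lia)). pose proof (Nat.mod_upper_bound t T ltac:(lia)). lia. }
  assert (0 < INR T) by (apply lt_0_INR; lia).
  apply Rnot_lt_le. intros Ha. nra.
Qed.

Lemma ln_inv_ge_half eps : 0 < eps <= 1 / 2 -> / 2 <= ln (1 / eps).
Proof.
  intros He. assert (H2 : 2 <= 1 / eps).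
  { apply (Rmult_le_reg_r eps); [lra|]. unfold Rdiv. rewrite Rmult_assoc, Rinv_l, Rmult_1_r; lra. }
  pose proof ln_lt_2. destruct (Rle_lt_or_eq_dec 2 (1 / eps) H2) as [H'|<-]; [|lra].
  pose proof (ln_increasing 2 (1 / eps) ltac:(lra) H'). lra.
Qed.

Lemma block_count_ge g n eps t : 0 < g -> (3 <= n)%nat -> 0 < eps <= 1 / 2 ->
  (6 / g + 6) * INR n * ln (1 / eps) <= INR t -> 2 * ln (1 / eps) / g <= INR (t / (3 * n - 1)).
Proof.
  intros Hg Hn He Ht. apply nat_div_ge; [lia|].
  pose proof (ln_inv_ge_half eps He).
  assert (Rn : 3 <= INR n) by (replace 3 with (INR 3) by (simpl; lra); now apply le_INR).
  assert (RT : INR (3 * n - 1) <= 3 * INR n) by (rewrite minus_INR, mult_INR by lia; simpl; lra).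
  assert (0 <= 2 * ln (1 / eps) / g)
    by (unfold Rdiv; apply Rmult_le_pos; [lra|apply Rlt_le, Rinv_0_lt_compat; lra]).
  eapply Rle_trans; [apply Rmult_le_compat_r; [lra|exact RT]|].
  eapply Rle_trans; [|exact Ht].
  replace ((6 / g + 6) * INR n * ln (1 / eps))
    with (3 * INR n * (2 * ln (1 / eps) / g) + 6 * INR n * ln (1 / eps)) by (field; lra).
  nra.
Qed.

Lemma exp_pow x k : exp x ^ k = exp (INR k * x).
Proof.
  induction k; simpl; [now rewrite Rmult_0_l, exp_0|].
  rewrite IHk, <- exp_plus. f_equal. destruct k; simpl; ring.
Qed.

Lemma geometric_le (g eps : R) (k : nat) :
  0 < g <= 1 -> 0 < eps <= 1 / 2 -> 2 * ln (1 / eps) / g <= INR k -> (1 - g) ^ k * 2 <= eps.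
Proof.
  intros Hg He Hk.
  assert (H1 : (1 - g) ^ k <= exp (INR k * - g)).
  { rewrite <- exp_pow. apply pow_incr. pose proof (exp_ineq1_le (- g)). lra. }
  assert (H2 : exp (INR k * - g) <= exp (- (2 * ln (1 / eps)))).
  { apply exp_le. apply (Rmult_le_compat_r g) in Hk; [|lra].
    unfold Rdiv in Hk. rewrite Rmult_assoc, Rinv_l, Rmult_1_r in Hk; lra. }
  assert (H3 : exp (- (2 * ln (1 / eps))) = eps * eps).
  { replace (- (2 * ln (1 / eps))) with (- ln (1 / eps) + - ln (1 / eps)) by ring.
    rewrite exp_plus, exp_Ropp, exp_ln by (apply Rdiv_lt_0_compat; lra). field. lra. }
  nra.
Qed.

Lemma fold_Rmax_map_le {A} (l : list A) f b :
  0 <= b -> (forall x, In x l -> f x <= b) -> fold_right Rmax 0 (map f l) <= b.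
Proof.
  intros Hb H. induction l as [|x l IH]; simpl; [exact Hb|].
  apply Rmax_lub; [apply H; now left|apply IH; intros; apply H; now right].
Qed.

Theorem lemma12 :
  forall c : R, 1 <= c ->
  exists C : R, 0 < C /\
    forall (n U : nat) (eps : R) (t : nat) (pi : state -> R),
      (3 <= n)%nat -> (3 <= U)%nat ->
      INR n / c <= INR U -> INR U <= c * INR n ->
      0 < eps -> eps <= 1/2 ->
      stationary n U pi ->
      C * INR n * ln (1 / eps) <= INR t ->
      vdist n U pi t <= eps.
Proof.
  intros c Hc. pose proof (doeblin_g_bounds c Hc) as Hg.
  exists (6 / doeblin_g c + 6). split; [assert (0 < 6 / doeblin_g c) by (apply Rdiv_lt_0_compat; lra); lra|].
  intros n U eps t pi Hn HU Hnc HUc He He2 Hst Ht.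
  assert (Rn : 3 <= INR n) by (replace 3 with (INR 3) by (simpl; lra); now apply le_INR).
  set (T := (3 * n - 1)%nat). set (beta := doeblin_g c / (2 * INR n)).
  assert (Hb : 0 <= beta) by (unfold beta, Rdiv; apply Rmult_le_pos; [lra|apply Rlt_le, Rinv_0_lt_compat; lra]).
  assert (Erho : 1 - 2 * INR n * beta = 1 - doeblin_g c) by (unfold beta; field; lra).
  assert (Hk := block_count_ge (doeblin_g c) n eps t ltac:(lra) Hn ltac:(lra) Ht).
  apply fold_Rmax_map_le; [lra|]. intros x Hx. fold (row_dist n U pi x t).
  rewrite (Nat.div_mod_eq t T), Nat.mul_comm.
  eapply Rle_trans.
  { apply (row_dist_doeblin_iter n U pi Hn HU Hst x T beta); auto; [rewrite Erho; lra|].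
    intros z y Hz Hy. now apply Kpow_ge_uniform. }
  rewrite Erho. eapply Rle_trans; [|apply (geometric_le (doeblin_g c) eps (t / T)); auto; lra].
  apply Rmult_le_compat_l; [apply pow_le; lra|now apply row_dist_le_2].
Qed.
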